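(* A bitopological space $(X,\tau[tt],\tau[ff])$ is $\mathbb{B}$-sober if and only if for every pair $(K_{tt},K_{ff})$, where $K_{tt}$ is an irreducible closed subset of $(X,\tau[tt])$ and $K_{ff}$ is an irreducible closed subset of $(X,\tau[ff])$, there is a unique point $x\in X$ such that $K_{tt}$ is the closure of $\{x\}$ in $(X,\tau[tt])$ and $K_{ff}$ is the closure of $\{x\}$ in $(X,\tau[ff])$.
   Context: $\mathbb{B}=\{0,1,tt,ff\}$ is the four-element Boolean algebra with bottom $0$, top $1$, and $tt,ff$ incomparable complements. A bitopological space $(X,\tau[tt],\tau[ff])$ is identified with the $\mathbb{B}$-topology $\tau=\{\lambda\colon X\to\mathbb{B}: \lambda[tt]\in\tau[tt],\ \lambda[ff]\in\tau[ff]\}$, where $\lambda[b]=\{x:\lambda(x)\ge b\}$. For $b\in\mathbb{B}$, $b_X$ is the constant map with value $b$. A $\mathbb{B}$-point of $\tau$ is a frame homomorphism $p\colon\tau\to\mathbb{B}$ (preserving finite meets and arbitrary joins) with $p(b_X)=b$ for all $b\in\mathbb{B}$. The space is $\mathbb{B}$-sober if for every $\mathbb{B}$-point $p$ of $\tau$ there is a unique $x\in X$ with $p(\lambda)=\lambda(x)$ for all $\lambda\in\tau$. An irreducible closed subset of a topological space is a nonempty closed set not contained in the union of two closed sets unless contained in one of them. *)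

Definition is_topology {X : Type} (O : (X -> Prop) -> Prop) : Prop :=
  O (fun _ => True) /\
  (forall A B, O A -> O B -> O (fun x => A x /\ B x)) /\
  (forall F : (X -> Prop) -> Prop, (forall A, F A -> O A) ->
       O (fun x => exists A, F A /\ A x)).

Definition is_closed {X : Type} (O : (X -> Prop) -> Prop) (C : X -> Prop) : Prop :=
  O (fun x => ~ C x).

Definition closure {X : Type} (O : (X -> Prop) -> Prop) (A : X -> Prop) : X -> Prop :=
  fun y => forall C, is_closed O C -> (forall z, A z -> C z) -> C y.

Definition irreducible_closed {X : Type} (O : (X -> Prop) -> Prop) (K : X -> Prop) : Prop :=
  is_closed O K /\ (exists x, K x) /\
  (forall A B, is_closed O A -> is_closed O B ->
     (forall x, K x -> A x \/ B x) ->
     (forall x, K x -> A x) \/ (forall x, K x -> B x)).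

(** The four-element Boolean algebra B = {0,1,tt,ff}. *)
Inductive B4 : Type := B0 | B1 | Btt | Bff.

Definition Ble (a b : B4) : Prop :=
  match a, b with
  | B0, _ => True
  | _, B1 => True
  | Btt, Btt => True
  | Bff, Bff => True
  | _, _ => False
  end.

Definition Blub {I : Type} (F : I -> B4) (b : B4) : Prop :=
  (forall i, Ble (F i) b) /\ (forall c, (forall i, Ble (F i) c) -> Ble b c).
Definition Bglb (a b c : B4) : Prop :=
  Ble c a /\ Ble c b /\ (forall d, Ble d a -> Ble d b -> Ble d c).

Definition cut {X : Type} (b : B4) (l : X -> B4) : X -> Prop := fun x => Ble b (l x).

Definition Btopology {X : Type} (Ott Off : (X -> Prop) -> Prop) (l : X -> B4) : Prop :=
  Ott (cut Btt l) /\ Off (cut Bff l).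

Definition constB {X : Type} (b : B4) : X -> B4 := fun _ => b.

Definition ple {X : Type} (l m : X -> B4) : Prop := forall x, Ble (l x) (m x).

Definition is_lub_in {X I : Type} (tau : (X -> B4) -> Prop) (F : I -> X -> B4)
  (l : X -> B4) : Prop :=
  tau l /\ (forall i, ple (F i) l) /\
  (forall m, tau m -> (forall i, ple (F i) m) -> ple l m).
Definition is_glb_in {X : Type} (tau : (X -> B4) -> Prop) (l m n : X -> B4) : Prop :=
  tau n /\ ple n l /\ ple n m /\
  (forall k, tau k -> ple k l -> ple k m -> ple k n).

(** A B-point of tau: a frame homomorphism tau -> B (preserving finite meets
    and arbitrary joins) with p(b_X) = b for all b. *)
Definition Bpoint {X : Type} (tau : (X -> B4) -> Prop) (p : (X -> B4) -> B4) : Prop :=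
  (forall b, p (constB b) = b) /\
  (forall l m n, tau l -> tau m -> is_glb_in tau l m n -> Bglb (p l) (p m) (p n)) /\
  (forall (I : Type) (F : I -> X -> B4) l,
     (forall i, tau (F i)) -> is_lub_in tau F l -> Blub (fun i => p (F i)) (p l)).

Definition Bsober {X : Type} (Ott Off : (X -> Prop) -> Prop) : Prop :=
  forall p, Bpoint (Btopology Ott Off) p ->
    exists! x : X, forall l, Btopology Ott Off l -> p l = l x.

From Stdlib Require Import Bool Classical ClassicalEpsilon FunctionalExtensionality PropExtensionality.

(* A [B4]-valued open [l] is just the pair of opens [cut Btt l] and [cut Bff l], and meets and
   joins of such maps are computed componentwise.  Reading off the two components of a
   B-point [p] on the B-opens concentrated on one side therefore gives a completely prime
   filter of opens for each topology, and conversely any two such filters assemble into a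
   B-point.  Completely prime filters of opens correspond to irreducible closed sets [K]
   through [U |-> K meets U], and [K] is the closure of [x] exactly when this filter is the
   neighbourhood filter of [x].  Hence points [x] representing a B-point are the same as
   common generic points of the corresponding pair of irreducible closed sets. *)

Lemma pred_ext {X : Type} (U V : X -> Prop) : (forall x, U x <-> V x) -> U = V.
Proof.
  intros H; extensionality x; apply propositional_extensionality, H.
Qed.

Lemma ex_unique_impl {A : Type} (P Q : A -> Prop) :
  (forall x, P x <-> Q x) -> (exists! x, P x) -> exists! x, Q x.
Proof.
  intros E [x [Px Hu]]; exists x; split.
  - now apply E.
  - intros y Qy; now apply Hu, E.
Qed.

Section Topology.

Context {X : Type} (O : (X -> Prop) -> Prop).
Hypothesis HO : is_topology O.

Lemma open_union (I : Type) (G : I -> X -> Prop) :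
  (forall i, O (G i)) -> O (fun x => exists i, G i x).
Proof.
  intros HG; destruct HO as [_ [_ Hunion]].
  replace (fun x => exists i, G i x) with (fun x => exists A, (exists i, A = G i) /\ A x).
  - apply Hunion; intros A [i ->]; apply HG.
  - apply pred_ext; intros x; split.
    + intros [A [[i ->] Hx]]; now exists i.
    + intros [i Hx]; exists (G i); split; [now exists i | exact Hx].
Qed.

Lemma open_inter (U V : X -> Prop) : O U -> O V -> O (fun x => U x /\ V x).
Proof. destruct HO as [_ [Hinter _]]; apply Hinter. Qed.

Lemma open_full : O (fun _ => True).
Proof. now destruct HO. Qed.

Lemma open_empty : O (fun _ => False).
Proof.
  replace (fun _ : X => False) with (fun x => exists i : False, (fun _ : X => True) x).
  - apply open_union; intros [].
  - apply pred_ext; intros x; split; [intros [[] _] | intros []].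
Qed.

Lemma closed_compl (U : X -> Prop) : O U -> is_closed O (fun x => ~ U x).
Proof.
  unfold is_closed; replace (fun x => ~ ~ U x) with U; [easy|].
  apply pred_ext; intros x; split; [tauto | apply NNPP].
Qed.

Lemma closure_singleton x y :
  closure O (fun z => z = x) y <-> forall U, O U -> U y -> U x.
Proof.
  split.
  - intros Hcl U HU Uy; apply NNPP; intros nUx.
    apply (Hcl (fun w => ~ U w)); [now apply closed_compl | now intros z -> | exact Uy].
  - intros H C HC Cx; apply NNPP; intros nCy.
    exact (H _ HC nCy (Cx x eq_refl)).
Qed.

Definition meets (K U : X -> Prop) : Prop := exists x, K x /\ U x.

Lemma closure_singleton_eq_iff (K : X -> Prop) x :
  is_closed O K ->
  ((forall y, K y <-> closure O (fun z => z = x) y) <->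
   (forall U, O U -> (meets K U <-> U x))).
Proof.
  intros HK; split.
  - intros E U HU; split.
    + intros [z [Kz Uz]]; apply E in Kz; rewrite closure_singleton in Kz; exact (Kz U HU Uz).
    + intros Ux; exists x; split; [|exact Ux].
      apply E; rewrite closure_singleton; auto.
  - intros H y; rewrite closure_singleton; split.
    + intros Ky U HU Uy; apply H; [exact HU | now exists y].
    + intros Hy; apply NNPP; intros nKy.
      (* [x] lies in [K], as the open complement of [K] meets [K] otherwise *)
      assert (Kx : K x).
      { apply NNPP; intros nKx.
        destruct (proj2 (H _ HK) nKx) as [z [Kz nKz]]; contradiction. }
      exact (Hy _ HK nKy Kx).
Qed.

Definition completely_prime_filter (F : (X -> Prop) -> Prop) : Prop :=
  F (fun _ => True) /\
  (forall U V, O U -> O V -> (F (fun x => U x /\ V x) <-> F U /\ F V)) /\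
  (forall (I : Type) (G : I -> X -> Prop), (forall i, O (G i)) ->
     (F (fun x => exists i, G i x) <-> exists i, F (G i))).

Lemma completely_prime_filter_empty (F : (X -> Prop) -> Prop) :
  completely_prime_filter F -> ~ F (fun _ => False).
Proof.
  intros [_ [_ Hunion]] Hempty.
  replace (fun _ : X => False) with (fun x => exists i : False, (fun _ : X => False) x)
    in Hempty by (apply pred_ext; intros x; split; [intros [[] _] | intros []]).
  apply Hunion in Hempty as [[] _]; intros [].
Qed.

Lemma irreducible_meets_filter (K : X -> Prop) :
  irreducible_closed O K -> completely_prime_filter (meets K).
Proof.
  intros [_ [[x Kx] Hirr]]; split; [|split].
  - now exists x.
  - intros U V HU HV; split.
    + intros [z [Kz [Uz Vz]]]; split; now exists z.
    + intros [[y [Ky Uy]] [z [Kz Vz]]]; apply NNPP; intros Hdisj.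
      destruct (Hirr _ _ (closed_compl U HU) (closed_compl V HV)) as [HnU | HnV].
      * intros w Kw; apply NNPP; intros N; apply Hdisj; exists w; split; [exact Kw|].
        split; apply NNPP; tauto.
      * exact (HnU y Ky Uy).
      * exact (HnV z Kz Vz).
  - intros I G _; split.
    + intros [z [Kz [i Gz]]]; exists i, z; auto.
    + intros [i [z [Kz Gz]]]; exists z; split; [exact Kz | now exists i].
Qed.

Section FilterCore.

Variable F : (X -> Prop) -> Prop.
Hypothesis HF : completely_prime_filter F.

Definition filter_core : X -> Prop := fun y => forall U, O U -> U y -> F U.

Lemma filter_core_compl :
  (fun y => ~ filter_core y) = (fun y => exists V : {V | O V /\ ~ F V}, proj1_sig V y).
Proof.
  apply pred_ext; intros y; split.
  - intros Hy; apply not_all_ex_not in Hy as [V HV].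
    apply NNPP; intros N; apply HV; intros OV Vy; apply NNPP; intros nFV.
    apply N; now exists (exist _ V (conj OV nFV)).
  - intros [[V [OV nFV]] Vy] Hy; exact (nFV (Hy V OV Vy)).
Qed.

Lemma filter_core_closed : is_closed O filter_core.
Proof.
  unfold is_closed; rewrite filter_core_compl.
  apply open_union; intros [V HV]; exact (proj1 HV).
Qed.

Lemma meets_filter_core U : O U -> (F U <-> meets filter_core U).
Proof.
  intros HU; split.
  - intros FU; apply NNPP; intros Hdisj.
    set (N := fun y => exists V : {V | O V /\ ~ F V}, proj1_sig V y).
    assert (HN : O N) by (apply open_union; intros [V HV]; exact (proj1 HV)).
    assert (UN : (fun x => U x /\ N x) = U).
    { apply pred_ext; intros x; split; [tauto|intros Ux; split; [exact Ux|]].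
      assert (Hx : (fun y => ~ filter_core y) x) by (intros Hx; apply Hdisj; now exists x).
      rewrite filter_core_compl in Hx; exact Hx. }
    destruct HF as [_ [Hinter Hunion]].
    rewrite <- UN, Hinter in FU by assumption.
    destruct FU as [_ FN]; apply Hunion in FN as [[V HV] FV]; [exact (proj2 HV FV)|].
    intros [V HV]; exact (proj1 HV).
  - intros [z [Hz Uz]]; exact (Hz U HU Uz).
Qed.

Lemma filter_core_irreducible : irreducible_closed O filter_core.
Proof.
  pose proof HF as [Hfull [Hinter _]].
  split; [exact filter_core_closed | split].
  - apply meets_filter_core in Hfull as [x [Hx _]]; [now exists x | exact open_full].
  - intros A B HA HB Hcov; apply NNPP; intros N.
    apply not_or_and in N as [NA NB].
    apply not_all_ex_not in NA as [y NA]; apply imply_to_and in NA as [Ky nAy].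
    apply not_all_ex_not in NB as [z NB]; apply imply_to_and in NB as [Kz nBz].
    assert (FA : F (fun w => ~ A w)) by exact (Ky _ HA nAy).
    assert (FB : F (fun w => ~ B w)) by exact (Kz _ HB nBz).
    assert (FAB : F (fun w => ~ A w /\ ~ B w)) by (apply Hinter; auto).
    apply meets_filter_core in FAB as [w [Kw [nAw nBw]]]; [|now apply open_inter].
    destruct (Hcov w Kw); contradiction.
Qed.

End FilterCore.

End Topology.

Definition atom (b : bool) : B4 := if b then Btt else Bff.

Lemma Ble_refl v : Ble v v.
Proof. now destruct v. Qed.

Lemma Ble_trans u v w : Ble u v -> Ble v w -> Ble u w.
Proof. destruct u, v, w; simpl; tauto. Qed.

Lemma Ble_iff_atoms v w : Ble v w <-> forall b, Ble (atom b) v -> Ble (atom b) w.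
Proof.
  split.
  - intros Hvw b Hv; exact (Ble_trans _ _ _ Hv Hvw).
  - intros H; pose proof (H true) as Htt; pose proof (H false) as Hff.
    destruct v, w; simpl in *; tauto.
Qed.

Lemma B4_ext v w : (forall b, Ble (atom b) v <-> Ble (atom b) w) -> v = w.
Proof.
  intros H; pose proof (H true) as Htt; pose proof (H false) as Hff.
  destruct v, w; simpl in *; tauto.
Qed.

Lemma Ble_negb_atom b v : ~ Ble (atom b) v -> Ble v (atom (negb b)).
Proof. destruct b, v; simpl; tauto. Qed.

Lemma not_Ble_negb_atom b : ~ Ble (atom b) (atom (negb b)).
Proof. now destruct b. Qed.

Definition B4_of (P : bool -> Prop) : B4 :=
  if excluded_middle_informative (P true) then
    if excluded_middle_informative (P false) then B1 else Btt
  else if excluded_middle_informative (P false) then Bff else B0.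

Lemma Ble_atom_B4_of P b : Ble (atom b) (B4_of P) <-> P b.
Proof.
  unfold B4_of.
  destruct (excluded_middle_informative (P true)), (excluded_middle_informative (P false)),
    b; simpl; tauto.
Qed.

Lemma Bglb_iff u v w :
  Bglb u v w <-> forall b, (Ble (atom b) w <-> Ble (atom b) u /\ Ble (atom b) v).
Proof.
  split.
  - intros [Hwu [Hwv Hmax]] b; split.
    + intros Hw; split; eapply Ble_trans; eauto.
    + intros [Hu Hv]; exact (Hmax _ Hu Hv).
  - intros H; split; [|split].
    + apply Ble_iff_atoms; intros b; rewrite H; tauto.
    + apply Ble_iff_atoms; intros b; rewrite H; tauto.
    + intros d Hdu Hdv; apply Ble_iff_atoms; intros b Hd; apply H.
      split; eapply Ble_trans; eauto.
Qed.

Lemma Blub_iff (I : Type) (F : I -> B4) v :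
  Blub F v <-> forall b, (Ble (atom b) v <-> exists i, Ble (atom b) (F i)).
Proof.
  split.
  - intros [Hub Hleast] b; split.
    + (* otherwise every [F i], hence [v], lies below the opposite atom *)
      intros Hv; apply NNPP; intros N.
      apply (not_Ble_negb_atom b), (Ble_trans _ _ _ Hv), Hleast.
      intros i; apply Ble_negb_atom; intros Hi; apply N; now exists i.
    + intros [i Hi]; exact (Ble_trans _ _ _ Hi (Hub i)).
  - intros H; split.
    + intros i; apply Ble_iff_atoms; intros b Hi; apply H; now exists i.
    + intros c Hc; apply Ble_iff_atoms; intros b Hv.
      apply H in Hv as [i Hi]; exact (Ble_trans _ _ _ Hi (Hc i)).
Qed.

Definition mkB {X : Type} (U : bool -> X -> Prop) : X -> B4 :=
  fun x => B4_of (fun b => U b x).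

Lemma cut_mkB {X : Type} (U : bool -> X -> Prop) b : cut (atom b) (mkB U) = U b.
Proof. apply pred_ext; intros x; apply Ble_atom_B4_of. Qed.

Lemma ple_iff {X : Type} (l m : X -> B4) :
  ple l m <-> forall b x, cut (atom b) l x -> cut (atom b) m x.
Proof.
  split.
  - intros H b x; unfold cut; apply Ble_iff_atoms, H.
  - intros H x; apply Ble_iff_atoms; intros b; apply H.
Qed.

Section Bitopology.

Context {X : Type} (Ott Off : (X -> Prop) -> Prop).
Hypotheses (HOtt : is_topology Ott) (HOff : is_topology Off).

Definition side (b : bool) : (X -> Prop) -> Prop := if b then Ott else Off.

Notation tau := (Btopology Ott Off).

Lemma side_topology b : is_topology (side b).
Proof. now destruct b. Qed.

Lemma Btopology_iff l : tau l <-> forall b, side b (cut (atom b) l).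
Proof.
  split.
  - intros [Htt Hff] []; assumption.
  - intros H; exact (conj (H true) (H false)).
Qed.

Lemma Btopology_mkB U : (forall b, side b (U b)) -> tau (mkB U).
Proof. intros H; apply Btopology_iff; intros b; rewrite cut_mkB; apply H. Qed.

Lemma is_glb_in_iff l m n :
  tau l -> tau m ->
  (is_glb_in tau l m n <->
   tau n /\ forall b x, cut (atom b) n x <-> cut (atom b) l x /\ cut (atom b) m x).
Proof.
  intros Hl Hm; rewrite Btopology_iff in Hl, Hm; split.
  - intros [Hn [Hnl [Hnm Hmax]]]; split; [exact Hn|].
    set (k := mkB (fun b x => cut (atom b) l x /\ cut (atom b) m x)).
    assert (Hk : tau k) by (apply Btopology_mkB; intros b; apply open_inter; auto using side_topology).
    assert (Hkn : ple k n).
    { apply Hmax; [exact Hk | |]; apply ple_iff; intros b x; unfold k; rewrite cut_mkB; tauto. }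
    rewrite ple_iff in Hnl, Hnm, Hkn; intros b x; split.
    + intros Hx; auto.
    + intros Hx; apply Hkn; unfold k; now rewrite cut_mkB.
  - intros [Hn Hcut]; split; [exact Hn | split; [|split]].
    + apply ple_iff; intros b x; rewrite Hcut; tauto.
    + apply ple_iff; intros b x; rewrite Hcut; tauto.
    + intros k _ Hkl Hkm; rewrite ple_iff in *; intros b x Hx; apply Hcut; auto.
Qed.

Lemma is_lub_in_iff (I : Type) (F : I -> X -> B4) l :
  (forall i, tau (F i)) ->
  (is_lub_in tau F l <->
   tau l /\ forall b x, cut (atom b) l x <-> exists i, cut (atom b) (F i) x).
Proof.
  intros HF; setoid_rewrite Btopology_iff in HF; split.
  - intros [Hl [HFl Hmin]]; split; [exact Hl|].
    set (k := mkB (fun b x => exists i, cut (atom b) (F i) x)).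
    assert (Hk : tau k) by (apply Btopology_mkB; intros b; apply open_union; auto using side_topology).
    assert (Hlk : ple l k).
    { apply Hmin; [exact Hk|]; intros i; apply ple_iff; intros b x Hx.
      unfold k; rewrite cut_mkB; now exists i. }
    setoid_rewrite ple_iff in HFl; rewrite ple_iff in Hlk; intros b x; split.
    + intros Hx; apply Hlk in Hx; unfold k in Hx; now rewrite cut_mkB in Hx.
    + intros [i Hx]; exact (HFl i b x Hx).
  - intros [Hl Hcut]; split; [exact Hl | split].
    + intros i; apply ple_iff; intros b x Hx; apply Hcut; now exists i.
    + intros m _ HFm; setoid_rewrite ple_iff in HFm; apply ple_iff; intros b x Hx.
      apply Hcut in Hx as [i Hx]; exact (HFm i b x Hx).
Qed.

Definition point_of_filters (F : bool -> (X -> Prop) -> Prop) (l : X -> B4) : B4 :=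
  B4_of (fun b => F b (cut (atom b) l)).

Lemma point_of_filters_Bpoint (F : bool -> (X -> Prop) -> Prop) :
  (forall b, completely_prime_filter (side b) (F b)) -> Bpoint tau (point_of_filters F).
Proof.
  intros HF; split; [|split].
  - intros v; apply B4_ext; intros b; unfold point_of_filters; rewrite Ble_atom_B4_of.
    destruct (HF b) as [Hfull _]; unfold cut, constB.
    destruct (classic (Ble (atom b) v)) as [Hb | Hb].
    + replace (fun _ : X => Ble (atom b) v) with (fun _ : X => True) by (apply pred_ext; tauto).
      tauto.
    + replace (fun _ : X => Ble (atom b) v) with (fun _ : X => False) by (apply pred_ext; tauto).
      pose proof (completely_prime_filter_empty _ _ (HF b)); tauto.
  - intros l m n Hl Hm Hn; apply is_glb_in_iff in Hn as [_ Hcut]; [|assumption..].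
    rewrite Btopology_iff in Hl, Hm.
    apply Bglb_iff; intros b; unfold point_of_filters; rewrite !Ble_atom_B4_of.
    rewrite (pred_ext _ _ (Hcut b)); destruct (HF b) as [_ [Hinter _]]; auto.
  - intros I G l HG Hl; apply is_lub_in_iff in Hl as [_ Hcut]; [|assumption].
    setoid_rewrite Btopology_iff in HG.
    apply Blub_iff; intros b; unfold point_of_filters; setoid_rewrite Ble_atom_B4_of.
    rewrite (pred_ext _ _ (Hcut b)); destruct (HF b) as [_ [_ Hunion]].
    apply (Hunion I (fun i => cut (atom b) (G i))); auto.
Qed.

Definition embed (b : bool) (U : X -> Prop) : X -> B4 :=
  mkB (fun c => if Bool.eqb c b then U else fun _ => False).

Lemma cut_embed b c U x : cut (atom c) (embed b U) x <-> c = b /\ U x.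
Proof.
  unfold embed; rewrite cut_mkB; destruct b, c; simpl; intuition discriminate.
Qed.

Lemma embed_open b U : side b U -> tau (embed b U).
Proof.
  intros HU; apply Btopology_mkB; intros c; destruct (Bool.eqb c b) eqn:E.
  - apply Bool.eqb_prop in E as ->; exact HU.
  - apply open_empty, side_topology.
Qed.

Lemma embed_full b : embed b (fun _ => True) = constB (atom b).
Proof.
  extensionality x; apply B4_ext; intros c.
  change (cut (atom c) (embed b (fun _ => True)) x <-> Ble (atom c) (atom b)).
  rewrite cut_embed; destruct b, c; simpl; intuition discriminate.
Qed.

Definition point_filter (p : (X -> B4) -> B4) (b : bool) (U : X -> Prop) : Prop :=
  Ble (atom b) (p (embed b U)).

Lemma point_filter_of_filters F b U : point_filter (point_of_filters F) b U <-> F b U.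
Proof.
  unfold point_filter, point_of_filters; rewrite Ble_atom_B4_of.
  replace (cut (atom b) (embed b U)) with U; [tauto|].
  apply pred_ext; intros x; rewrite cut_embed; tauto.
Qed.

Section Bpoint.

Variable p : (X -> B4) -> B4.
Hypothesis Hp : Bpoint tau p.

Lemma Bpoint_atom l b :
  tau l -> (Ble (atom b) (p l) <-> point_filter p b (cut (atom b) l)).
Proof.
  intros Hl; destruct Hp as [Hconst [Hglb _]].
  assert (Hb : tau (constB (atom b))).
  { rewrite <- embed_full; apply embed_open, open_full, side_topology. }
  assert (Hmeet : is_glb_in tau l (constB (atom b)) (embed b (cut (atom b) l))).
  { apply is_glb_in_iff; [exact Hl | exact Hb | split].
    - apply embed_open; rewrite Btopology_iff in Hl; apply Hl.
    - intros c x; rewrite cut_embed; unfold cut at 3, constB.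
      destruct b, c; simpl; intuition discriminate. }
  pose proof (Hglb _ _ _ Hl Hb Hmeet) as Hpglb; rewrite Hconst, Bglb_iff in Hpglb.
  unfold point_filter; rewrite Hpglb; pose proof (Ble_refl (atom b)); tauto.
Qed.

Lemma point_filter_prime b : completely_prime_filter (side b) (point_filter p b).
Proof.
  destruct Hp as [Hconst [Hglb Hlub]]; unfold point_filter; split; [|split].
  - rewrite embed_full, Hconst; apply Ble_refl.
  - intros U V HU HV.
    assert (Hmeet : is_glb_in tau (embed b U) (embed b V) (embed b (fun x => U x /\ V x))).
    { apply is_glb_in_iff; [now apply embed_open.. | split].
      - apply embed_open, open_inter; auto using side_topology.
      - intros c x; rewrite !cut_embed; tauto. }
    pose proof (Hglb _ _ _ (embed_open _ _ HU) (embed_open _ _ HV) Hmeet) as Hpglb.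
    now rewrite Bglb_iff in Hpglb.
  - intros I G HG.
    assert (Hjoin : is_lub_in tau (fun i => embed b (G i)) (embed b (fun x => exists i, G i x))).
    { apply is_lub_in_iff; [intros i; now apply embed_open|].
      split; [apply embed_open, open_union; auto using side_topology|].
      intros c x; rewrite cut_embed; split.
      - intros [-> [i Hx]]; exists i; now apply cut_embed.
      - intros [i Hx]; apply cut_embed in Hx as [-> Hx]; split; [reflexivity | now exists i]. }
    pose proof (Hlub _ _ _ (fun i => embed_open _ _ (HG i)) Hjoin) as Hplub.
    now rewrite Blub_iff in Hplub.
Qed.

Lemma Bpoint_eval_iff x :
  (forall l, tau l -> p l = l x) <->
  (forall b U, side b U -> (point_filter p b U <-> U x)).
Proof.
  split.
  - intros H b U HU; unfold point_filter; rewrite H by now apply embed_open.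
    change (cut (atom b) (embed b U) x <-> U x); rewrite cut_embed; tauto.
  - intros H l Hl; apply B4_ext; intros b; rewrite Bpoint_atom by exact Hl.
    apply H; rewrite Btopology_iff in Hl; apply Hl.
Qed.

End Bpoint.

Lemma closure_pair_iff (K : bool -> X -> Prop) x :
  (forall b, is_closed (side b) (K b)) ->
  (((forall y, K true y <-> closure Ott (fun z => z = x) y) /\
    (forall y, K false y <-> closure Off (fun z => z = x) y)) <->
   (forall b U, side b U -> (meets (K b) U <-> U x))).
Proof.
  intros HK; rewrite !closure_singleton_eq_iff by apply (HK true) || apply (HK false).
  split; [intros [Htt Hff] [] | intros H; split; [exact (H true) | exact (H false)]]; assumption.
Qed.

End Bitopology.

Theorem mainTheorem7 (X : Type) (Ott Off : (X -> Prop) -> Prop) :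
  is_topology Ott -> is_topology Off ->
  (Bsober Ott Off <->
   (forall Ktt Kff : X -> Prop,
      irreducible_closed Ott Ktt -> irreducible_closed Off Kff ->
      exists! x : X,
        (forall y, Ktt y <-> closure Ott (fun z => z = x) y) /\
        (forall y, Kff y <-> closure Off (fun z => z = x) y))).
Proof.
  intros HOtt HOff; split.
  - intros Hsober Ktt Kff Htt Hff.
    set (K := fun b : bool => if b then Ktt else Kff).
    assert (HK : forall b, irreducible_closed (side Ott Off b) (K b)) by now intros [].
    set (F := fun b => meets (K b)).
    assert (HF : forall b, completely_prime_filter (side Ott Off b) (F b))
      by (intros b; apply irreducible_meets_filter, HK).
    pose proof (point_of_filters_Bpoint _ _ HOtt HOff F HF) as Hp.
    refine (ex_unique_impl _ _ _ (Hsober _ Hp)); intros x.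
    rewrite (Bpoint_eval_iff _ _ HOtt HOff _ Hp); setoid_rewrite point_filter_of_filters.
    symmetry; exact (closure_pair_iff _ _ K x (fun b => proj1 (HK b))).
  - intros Hpairs p Hp.
    set (F := point_filter p).
    assert (HF : forall b, completely_prime_filter (side Ott Off b) (F b))
      by (intros b; now apply point_filter_prime).
    set (K := fun b => filter_core (side Ott Off b) (F b)).
    assert (HK : forall b, irreducible_closed (side Ott Off b) (K b))
      by (intros b; now apply filter_core_irreducible, HF; apply side_topology).
    assert (HFK : forall b U, side Ott Off b U -> (F b U <-> meets (K b) U))
      by (intros b; now apply meets_filter_core; [apply side_topology|]).
    refine (ex_unique_impl _ _ _ (Hpairs (K true) (K false) (HK true) (HK false))); intros x.
    rewrite (Bpoint_eval_iff _ _ HOtt HOff _ Hp).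
    rewrite (closure_pair_iff _ _ K x (fun b => proj1 (HK b))).
    split; intros H b U HU; rewrite <- (H b U HU); [|symmetry]; exact (HFK b U HU).
Qed.
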